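(* Assume the standing setting below. Let $\alpha\in(0,1/6]$ with $\alpha n$ an integer, let $P_1,P_2\subseteq X$ be disjoint with $|P_1|=|P_2|=\alpha n$, and let $T\subseteq X$ be nonempty. Let $F_c:=\mathrm{far}_{4(k+1)\phi_\alpha}(X\setminus P_1,T)$ and let $\mathcal{B}_c=(\mathcal{B}_c(1),\ldots,\mathcal{B}_c(L))$ be a $(\phi_\alpha/3)$-linear bin division of $(X\setminus P_1)\setminus F_c$ with respect to $T$. If $\mathcal{B}_c$ is well-represented in $P_2$ for $X\setminus P_1$, then for all $i\in[L-1]$, $$R(\mathcal{B}_c(i)\cap P_2,T)\ge\frac\alpha3\,R(\mathcal{B}_c(i+1),T).$$
   Context: Standing setting: $(X,\rho)$ is a finite metric space with $|X|=n$; $k\ge2$ is an integer and $\delta\in(0,1)$; $\log$ is the natural logarithm; for $\alpha>0$, $\phi_\alpha:=150\log(32k/\delta)/\alpha$. For nonempty $T\subseteq X$, $\rho(x,T):=\min_{y\in T}\rho(x,y)$ and $R(S,T):=\sum_{x\in S}\rho(x,T)$; ties are broken by a fixed ordering of $X$. For $S\subseteq X$ and real $r\ge0$, $\mathrm{far}_r(S,T)$ is the set of the $\lceil r\rceil$ points of $S$ furthest from $T$; if $|S|<r$, $\mathrm{far}_r(S,T):=S$ (trivial far set). For finite $W$, $A,B\subseteq W$, $B$ is well-represented in $A$ for $W$ if $|B\cap A|/|B|\in[r/2,\frac32 r]$ with $r=|A|/|W|$; a bin division is well-represented if all its bins are. A $z$-linear bin division ($z>0$) of $W$ with respect to $T$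 is a partition $(\mathcal{B}(1),\ldots,\mathcal{B}(L))$ of $W$ with: (1) if $z\le|W|$, $|\mathcal{B}(i)|\ge z(i+1)/2$ for all $i$; otherwise it is trivial, $\mathcal{B}(1):=W$; (2) $|\mathcal{B}(1)|\le\frac52 z$; (3) $|\mathcal{B}(i+1)|/|\mathcal{B}(i)|\le3/2$; (4) $\rho(x,T)\ge\rho(x',T)$ whenever $x\in\mathcal{B}(i)$, $x'\in\mathcal{B}(i+1)$. *)

From HB Require Import structures.
From mathcomp Require Import all_boot all_order all_algebra.
From mathcomp Require Import reals exp.
Set Implicit Arguments. Unset Strict Implicit. Unset Printing Implicit Defensive.
Import Order.TTheory GRing.Theory Num.Theory.
Local Open Scope ring_scope.

Section Defs.
Variables (R : realType) (X : finType) (rho : X -> X -> R).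

Definition is_metric : Prop :=
  [/\ forall x y, 0 <= rho x y,
      forall x y, rho x y = 0 <-> x = y,
      forall x y, rho x y = rho y x &
      forall x y z, rho x z <= rho x y + rho y z].

(* rho(x,T) = min_{y in T} rho(x,y)  (meaningful for nonempty T) *)
Definition distT (x : X) (T : {set X}) : R :=
  if [pick y in T] is Some y0 then \big[Num.min/rho x y0]_(y in T) rho x y
  else 0.

Definition costR (S T : {set X}) : R := \sum_(x in S) distT x T.

Definition phi (k : nat) (delta alpha : R) : R :=
  150 * ln (32 * k%:R / delta) / alpha.

(* "y comes before x" in the order: further from T first, ties broken by the
   fixed ordering of X (its enumeration rank). *)
Definition before (T : {set X}) (y x : X) : bool :=
  (distT x T < distT y T) ||
  ((distT y T == distT x T) && (enum_rank y < enum_rank x)%N).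

(* far_r(S,T): the ceil(r) points of S furthest from T; S itself if |S| < r *)
Definition far (r : R) (S T : {set X}) : {set X} :=
  if #|S|%:R < r then S
  else [set x in S | (#|[set y in S | before T y x]|%:Z < Num.ceil r)%R].

Definition well_rep (W A B : {set X}) : Prop :=
  let r := #|A|%:R / #|W|%:R : R in
  r / 2 <= #|B :&: A|%:R / #|B|%:R <= 3 / 2 * r.

Definition bin_div_well_rep (W A : {set X}) (L : nat) (B : nat -> {set X}) : Prop :=
  forall i, (1 <= i <= L)%N -> well_rep W A (B i).

Definition linear_bin_division (z : R) (W T : {set X}) (L : nat)
    (B : nat -> {set X}) : Prop :=
  [/\
      ((forall i j, (1 <= i <= L)%N -> (1 <= j <= L)%N -> i != j ->
         [disjoint B i & B j]) /\
      \bigcup_(1 <= i < L.+1) B i = W),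
      (if z <= #|W|%:R then
         forall i, (1 <= i <= L)%N -> z * (i.+1)%:R / 2 <= #|B i|%:R
       else L = 1%N /\ B 1%N = W),
      #|B 1%N|%:R <= 5 / 2 * z,
      (forall i, (1 <= i < L)%N -> #|B i.+1|%:R / #|B i|%:R <= 3 / 2 :> R) &
      (forall i x x', (1 <= i < L)%N -> x \in B i -> x' \in B i.+1 ->
         distT x' T <= distT x T)].

End Defs.

From HB Require Import structures.
From mathcomp Require Import all_boot all_order all_algebra.
From mathcomp Require Import reals exp.
From mathcomp Require Import ring.
Set Implicit Arguments. Unset Strict Implicit. Unset Printing Implicit Defensive.
Import Order.TTheory GRing.Theory Num.Theory.
Local Open Scope ring_scope.

(* Write b = |B(i)|, b' = |B(i+1)| and c = |B(i) ∩ P2|.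
   Bin property (4) says every point of B(i) is at least as far from T as
   every point of B(i+1); a double-counting argument then shows that the
   average distance over B(i) ∩ P2 dominates the average over B(i+1), so it
   suffices to prove the cardinality bound c >= (alpha/3) b'.  This follows
   from three facts: well-representation gives c >= (r/2) b with
   r = |P2| / |X \ P1|; r >= alpha since |X \ P1| <= |X| and |P2| = alpha n;
   and bin property (3) gives b' <= (3/2) b. *)

Section Cost.
Variables (R : realType) (X : finType) (rho : X -> X -> R).
Hypothesis hrho : is_metric rho.

Lemma distT_ge0 (x : X) (T : {set X}) : 0 <= distT rho x T.
Proof.
case: hrho => rho_ge0 _ _ _; rewrite /distT; case: pickP => [y0 _|_] //.
apply: (big_ind (fun v => 0 <= v)) => // a b ha hb.
by rewrite le_min ha hb.
Qed.

Lemma costR_ge0 (S T : {set X}) : 0 <= costR rho S T.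
Proof. by apply: sumr_ge0 => x _; exact: distT_ge0. Qed.

(* Double counting: if every point of S is at least as far from T as every
   point of S', then |S| R(S',T) <= |S'| R(S,T).  No metric axiom is used. *)
Lemma costR_dominate (S S' T : {set X}) :
  (forall x y, x \in S -> y \in S' -> distT rho y T <= distT rho x T) ->
  #|S|%:R * costR rho S' T <= #|S'|%:R * costR rho S T.
Proof.
move=> far_S.
rewrite !mulr_natl -!sumr_const /costR.
rewrite [leRHS]exchange_big /=.
by apply: ler_sum => x xS; apply: ler_sum => y yS'; exact: far_S.
Qed.

Lemma costR_transfer (S S' T : {set X}) (theta : R) :
  (forall x y, x \in S -> y \in S' -> distT rho y T <= distT rho x T) ->
  theta * #|S'|%:R <= #|S|%:R ->
  theta * costR rho S' T <= costR rho S T.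
Proof.
move=> far_S card_le.
have dom := costR_dominate far_S.
have [S'0 | S'_gt0] := posnP #|S'|.
  by rewrite /costR (eq_bigl _ _ (card0_eq S'0)) big_pred0_eq mulr0 costR_ge0.
have S'pos : (0 : R) < #|S'|%:R by rewrite ltr0n.
rewrite -(ler_pM2l S'pos) mulrCA mulrA.
by apply: le_trans dom; rewrite ler_wpM2r ?costR_ge0.
Qed.

End Cost.

Section Counting.
Variables (R : realType) (X : finType).

Lemma well_rep_lower (W A B : {set X}) :
  well_rep R W A B ->
  #|A|%:R / #|W|%:R / 2 * #|B|%:R <= #|B :&: A|%:R :> R.
Proof.
case/andP => low _.
have [B0 | B_gt0] := posnP #|B|; first by rewrite B0 mulr0.
by rewrite -ler_pdivlMr ?ltr0n.
Qed.

Lemma well_rep_nonempty (W A B : {set X}) :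
  (0 : R) < #|A|%:R / #|W|%:R -> well_rep R W A B -> (0 < #|B|)%N.
Proof.
move=> r_gt0 /andP [low _]; rewrite lt0n; apply/negP => /eqP B0.
by move: low; rewrite B0 invr0 mulr0 leNgt divr_gt0.
Qed.

Lemma density_ge (alpha : R) (A W : {set X}) :
  (0 < #|X|)%N -> 0 < alpha -> A \subset W ->
  #|A|%:R = alpha * #|X|%:R -> alpha <= #|A|%:R / #|W|%:R.
Proof.
move=> X_gt0 alpha_gt0 sAW cardA.
have A_pos : (0 : R) < #|A|%:R by rewrite cardA mulr_gt0 ?ltr0n.
have W_pos : (0 : R) < #|W|%:R.
  by apply: lt_le_trans A_pos _; rewrite ler_nat subset_leq_card.
by rewrite ler_pdivlMr // cardA ler_pM2l // ler_nat max_card.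
Qed.

End Counting.

Theorem lemma15 (R : realType) (X : finType) (rho : X -> X -> R)
  (hrho : is_metric rho) (k : nat) (delta : R) (alpha : R)
  (hk : (2 <= k)%N) (hdelta : 0 < delta < 1)
  (halpha : 0 < alpha <= 1 / 6)
  (halphan : exists m : nat, alpha * #|X|%:R = m%:R)
  (P1 P2 T : {set X})
  (hdisj : [disjoint P1 & P2])
  (hP1 : #|P1|%:R = alpha * #|X|%:R) (hP2 : #|P2|%:R = alpha * #|X|%:R)
  (hT : T != set0)
  (L : nat) (B : nat -> {set X}) :
  let Fc := far rho (4 * (k.+1)%:R * phi k delta alpha) (~: P1) T in
  linear_bin_division rho (phi k delta alpha / 3) ((~: P1) :\: Fc) T L B ->
  bin_div_well_rep R (~: P1) P2 L B ->
  forall i, (1 <= i < L)%N ->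
    alpha / 3 * costR rho (B i.+1) T <= costR rho (B i :&: P2) T.
Proof.
move=> Fc [_ _ _ bin_ratio bin_order] well_repB i /andP [i_ge1 i_ltL].
have /andP [alpha_gt0 _] := halpha.
have wr_i := well_repB i (introT andP (conj i_ge1 (ltnW i_ltL))).
have X_gt0 : (0 < #|X|)%N by case/set0Pn: hT => t _; apply/card_gt0P; exists t.
have sP2 : P2 \subset ~: P1 by rewrite -disjoints_subset disjoint_sym.
have density := density_ge X_gt0 alpha_gt0 sP2 hP2.
have Bi_pos : (0 : R) < #|B i|%:R
  by rewrite ltr0n (well_rep_nonempty _ wr_i) // (lt_le_trans alpha_gt0).
have ratio : #|B i.+1|%:R <= 3 / 2 * #|B i|%:R :> R
  by rewrite -ler_pdivrMr // bin_ratio ?i_ge1.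
have repr := well_rep_lower wr_i.
apply: costR_transfer => // [x y /setIP [xBi _] yBi1|].
  by apply: bin_order xBi yBi1; rewrite i_ge1.
apply: le_trans repr; apply: (@le_trans _ _ (alpha * #|B i|%:R / 2)).
  apply: le_trans (ler_wpM2l _ ratio) _; first by rewrite divr_ge0 ?ltW.
  by rewrite le_eqVlt; apply/orP; left; apply/eqP; field.
by rewrite mulrAC ler_pM2r // ler_wpM2r ?invr_ge0 ?ler0n.
Qed.
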